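(* For all $n \geq 0$: (i) $a(a(n)) = 2a(n)$; (ii) $b(b(n)) = 2b(n)$; (iii) $a(b(n)) = 2b(n)+1$; (iv) $b(a(n)) = 2a(n)+1$; (v) $a(a(n)) = b(a(n)) - 1$; (vi) $b(b(n)) = a(b(n)) - 1$; (vii) $a(n) - b(n) = 1 - 2t(n)$, in particular $a(n)-b(n) \in \{1,-1\}$; (viii) $a(b(n)) - b(a(n)) = 4t(n) - 2$, in particular $a(b(n)) - b(a(n)) \in \{2,-2\}$.
   Context: The Thue–Morse sequence $(t(n))_{n\geq 0}$ is defined by $t(0)=0$, $t(2n)=t(n)$, $t(2n+1)=1-t(n)$. A nonnegative integer is odious if the sum of its binary digits is odd and evil if it is even. $(a(n))_{n\geq0}$ is the increasing sequence of odious numbers and $(b(n))_{n\geq 0}$ the increasing sequence of evil numbers, both indexed from $0$ (so $a(0)=1, a(1)=2,\ldots$ and $b(0)=0, b(1)=3, \ldots$). *)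

From mathcomp Require Import all_boot all_order all_algebra.
Set Implicit Arguments. Unset Strict Implicit. Unset Printing Implicit Defensive.

(* bsum_fuel is the binary digit sum computed by peeling off the last bit;
   with fuel n for argument n the recursion always terminates naturally. *)
Fixpoint bsum_fuel (fuel n : nat) : nat :=
  match fuel with
  | 0 => 0
  | f.+1 => if n is 0 then 0 else odd n + bsum_fuel f n./2
  end.
Definition bsum (n : nat) : nat := bsum_fuel n n.
Lemma half_le n : n./2 <= n.
Proof. by rewrite -{2}(odd_double_half n) -addnn addnA leq_addl. Qed.
Lemma half_lt n : 0 < n -> n./2 < n.
Proof.
move=> H; rewrite -{2}(odd_double_half n) -addnn addnA.
case E: n./2 => [|h]; last by rewrite !addnS ltnS addSn ltnS leq_addl.
by move: (odd_double_half n) H; rewrite E => <-; case: odd.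
Qed.
Lemma bsum_fuelE f f' n : n <= f -> n <= f' -> bsum_fuel f n = bsum_fuel f' n.
Proof.
elim: f f' n => [|f IH] [|f'] n H1 H2; try by case: n H1 H2.
rewrite [LHS]/= [RHS]/=; case: n H1 H2 => // n H1 H2; congr (_ + _); apply: IH.
- by rewrite -ltnS; apply: leq_trans H1; have := @half_lt n.+1 (ltn0Sn n).
- by rewrite -ltnS; apply: leq_trans H2; have := @half_lt n.+1 (ltn0Sn n).
Qed.
Lemma bsum_rec n : bsum n = if n is 0 then 0 else odd n + bsum n./2.
Proof.
case: n => // n; rewrite /bsum /=; congr (_ + _); apply: bsum_fuelE => //.
by have := @half_lt n.+1 (ltn0Sn n); rewrite ltnS.
Qed.
Lemma half_doubleS k : k.*2.+1./2 = k.
Proof. by rewrite -[k.*2.+1]addn1 halfD odd_double doubleK addn0. Qed.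
Lemma bsum_pair k : bsum k.*2.+1 = (bsum k.*2).+1.
Proof.
rewrite [LHS]bsum_rec oddS odd_double half_doubleS.
case: k => [|k]; first by [].
by rewrite [bsum k.+1.*2]bsum_rec odd_double doubleK.
Qed.
Definition cnt (P : pred nat) (m : nat) : nat := count P (iota 0 m).
Lemma cntS P m : cnt P m.+1 = cnt P m + P m.
Proof. by rewrite /cnt -addn1 iotaD count_cat /= addn0. Qed.
Lemma nth_elem_exists (P : pred nat) :
  (forall k, P k.*2 || P k.*2.+1) ->
  forall n, exists m, P m && (cnt P m == n).
Proof.
move=> HP n.
have Hc : forall k, k <= cnt P k.*2.
  elim=> [|k IH] //; rewrite doubleS !cntS -addnA.
  have : (1 <= P k.*2 + P k.*2.+1) by move: (HP k); case: (P k.*2); case: (P k.*2.+1).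
  by move=> H; rewrite -addn1 leq_add.
have ex : exists m, n < cnt P m by exists n.+1.*2; exact: Hc.
case: (ex_minnP ex) => m Hm Hmin.
case: m Hm Hmin => [|m] Hm Hmin; first by [].
have Hlt : cnt P m <= n by rewrite leqNgt; apply/negP=> /Hmin; rewrite ltnn.
move: Hm; rewrite cntS; case Pm: (P m) => /= H1.
  by exists m; rewrite Pm eqn_leq Hlt /=; rewrite addn1 ltnS in H1.
by rewrite addn0 ltnNge Hlt in H1.
Qed.

Definition odious (n : nat) : bool := odd (bsum n).
Definition evil (n : nat) : bool := ~~ odd (bsum n).

Lemma odious_pair k : odious k.*2 || odious k.*2.+1.
Proof. by rewrite /odious bsum_pair /=; case: odd. Qed.
Lemma evil_pair k : evil k.*2 || evil k.*2.+1.
Proof. by rewrite /evil bsum_pair /=; case: odd. Qed.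

(* a n = the n-th odious number (0-indexed): the odious m having exactly n
   odious numbers below it.  Similarly b n for evil numbers. *)
Definition a (n : nat) : nat := ex_minn (nth_elem_exists odious_pair n).
Definition b (n : nat) : nat := ex_minn (nth_elem_exists evil_pair n).

Fixpoint tm_fuel (fuel n : nat) : nat :=
  match fuel with
  | 0 => 0
  | f.+1 => if n is 0 then 0
            else if odd n then 1 - tm_fuel f n./2 else tm_fuel f n./2
  end.
Definition t (n : nat) : nat := tm_fuel n n.

From mathcomp Require Import all_boot all_order all_algebra.
From mathcomp Require Import ring.
Import GRing.Theory Num.Theory.
Local Open Scope ring_scope.

(* Doubling preserves the binary digit sum and 2k+1 adds one digit, so among
   2k, 2k+1 exactly one number is odious and one is evil, and 2k is odious iff
   k is.  Hence the odious and evil numbers below 2k are exactly k each,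
   which pins down a n = 2n + [n evil] and b n = 2n + [n odious].  All eight
   identities follow by substituting this formula into itself, using that a n
   is odious and b n is evil. *)

Lemma bsum_double k : bsum k.*2 = bsum k.
Proof. by rewrite bsum_rec; case: k => [|k] //; rewrite odd_double doubleK. Qed.

Lemma odious_double k : odious k.*2 = odious k.
Proof. by rewrite /odious bsum_double. Qed.

Lemma odious_doubleS k : odious k.*2.+1 = ~~ odious k.
Proof. by rewrite /odious bsum_pair bsum_double. Qed.

Lemma evilE k : evil k = ~~ odious k.
Proof. by []. Qed.

Lemma odious_pair_xor k : odious k.*2 (+) odious k.*2.+1.
Proof. by rewrite odious_double odious_doubleS; case: odious. Qed.

Lemma evil_pair_xor k : evil k.*2 (+) evil k.*2.+1.
Proof. by rewrite !evilE odious_double odious_doubleS; case: odious. Qed.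

Section PairSplitPredicate.

Variable P : pred nat.
Hypothesis P_pair_xor : forall k, P k.*2 (+) P k.*2.+1.

Lemma cnt_double k : cnt P k.*2 = k.
Proof.
elim: k => [|k IHk] //; rewrite doubleS !cntS IHk -addnA.
by move: (P_pair_xor k); case: (P k.*2); case: (P k.*2.+1); rewrite /= ?addn1.
Qed.

Lemma pair_split_elemE m : P m -> m = ((cnt P m).*2 + ~~ P (cnt P m).*2)%N.
Proof.
move=> Pm; rewrite -(odd_double_half m) in Pm *.
case: (odd m) Pm => /=; move: m./2 => q Pm.
- have notPq : ~~ P q.*2 by move: (P_pair_xor q); rewrite Pm addbT.
  by rewrite cntS cnt_double (negbTE notPq) addn0 notPq addn1.
- by rewrite cnt_double Pm addn0.
Qed.

End PairSplitPredicate.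

Arguments pair_split_elemE {P} P_pair_xor {m}.

Lemma a_spec n : odious (a n) /\ cnt odious (a n) = n.
Proof. by rewrite /a; case: ex_minnP => m /andP[Pm /eqP]. Qed.

Lemma b_spec n : evil (b n) /\ cnt evil (b n) = n.
Proof. by rewrite /b; case: ex_minnP => m /andP[Pm /eqP]. Qed.

Lemma aE n : a n = (n.*2 + ~~ odious n)%N.
Proof.
have [odious_an cnt_an] := a_spec n.
by rewrite (pair_split_elemE odious_pair_xor odious_an) cnt_an odious_double.
Qed.

Lemma bE n : b n = (n.*2 + odious n)%N.
Proof.
have [evil_bn cnt_bn] := b_spec n.
by rewrite (pair_split_elemE evil_pair_xor evil_bn) cnt_bn evilE odious_double negbK.
Qed.

Lemma tm_fuelE f n : (n <= f)%N -> tm_fuel f n = odious n.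
Proof.
elim: f n => [|f IHf] [|n] le_nf //=.
rewrite IHf; last by rewrite -ltnS (leq_trans (half_lt (ltn0Sn n)) le_nf).
by rewrite /odious [bsum n.+1]bsum_rec /= oddD oddb; case: (odd n); case: odd.
Qed.

Lemma tE n : t n = odious n.
Proof. exact: tm_fuelE. Qed.

Theorem corollary3 (n : nat) :
  (* (i) *)    a (a n) = (2 * a n)%N /\
  (* (ii) *)   b (b n) = (2 * b n)%N /\
  (* (iii) *)  a (b n) = (2 * b n + 1)%N /\
  (* (iv) *)   b (a n) = (2 * a n + 1)%N /\
  (* (v) *)    ((a (a n))%:Z = (b (a n))%:Z - 1)%R /\
  (* (vi) *)   ((b (b n))%:Z = (a (b n))%:Z - 1)%R /\
  (* (vii) *)  ((a n)%:Z - (b n)%:Z = 1 - 2 * (t n)%:Z)%R /\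
               ((a n)%:Z - (b n)%:Z \in [:: 1; -1]%R) /\
  (* (viii) *) ((a (b n))%:Z - (b (a n))%:Z = 4 * (t n)%:Z - 2)%R /\
               ((a (b n))%:Z - (b (a n))%:Z \in [:: 2; -2]%R).
Proof.
have [odious_an _] := a_spec n; have [not_odious_bn _] := b_spec n.
rewrite evilE in not_odious_bn.
have aa : a (a n) = (2 * a n)%N by rewrite aE odious_an addn0 mul2n.
have bb : b (b n) = (2 * b n)%N by rewrite bE (negbTE not_odious_bn) addn0 mul2n.
have ab : a (b n) = (2 * b n + 1)%N by rewrite aE not_odious_bn mul2n.
have ba : b (a n) = (2 * a n + 1)%N by rewrite bE odious_an mul2n.
have a_sub_b : (a n)%:Z - (b n)%:Z = 1 - 2 * (t n)%:Z.
  by rewrite aE bE tE; case: odious; rewrite !PoszD /=; ring.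
have ab_sub_ba : (a (b n))%:Z - (b (a n))%:Z = 4 * (t n)%:Z - 2.
  have -> : (a (b n))%:Z - (b (a n))%:Z = - 2 * ((a n)%:Z - (b n)%:Z).
    by rewrite ab ba !PoszD; ring.
  by rewrite a_sub_b; ring.
do 4 (split; first by []).
split; first by rewrite aa ba !PoszD; ring.
split; first by rewrite bb ab !PoszD; ring.
split; first exact: a_sub_b.
split; first by rewrite a_sub_b tE; case: odious.
split; first exact: ab_sub_ba.
by rewrite ab_sub_ba tE; case: odious.
Qed.
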